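(* Let $n\ge3$, $m=n-1$, and consider $$(P):\ \sup\ x_{n-1}\ \text{ s.t. }\ x_1E_1+\sum_{i=2}^{n-2}x_i(E_i+E_{i-1,n})+x_{n-1}(-E_{n-1}+E_{n-2,n})\preceq I_{n-1}\oplus 0_1,$$ with dual $(D)$. Then $\operatorname{val}(P)=0$ and $(D)$ is infeasible, so $\operatorname{val}(D)=+\infty$.
   Context: $E_{ij}\in\mathcal S^n$ is the symmetric matrix whose only nonzero entries are $1$ in positions $(i,j)$ and $(j,i)$; $E_i:=E_{ii}$. For $(P)$: $\sup\{c^Tx:\sum_ix_iA_i\preceq B\}$ the dual is $(D)$: $\inf\{B\bullet Y:A_i\bullet Y=c_i\ \forall i,\ Y\succeq0\}$, $S\bullet T=\operatorname{trace}(ST)$, with $\inf\emptyset=+\infty$. *)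

From HB Require Import structures.
From mathcomp Require Import all_boot all_order all_algebra.
Set Implicit Arguments. Unset Strict Implicit. Unset Printing Implicit Defensive.
Import Order.TTheory GRing.Theory Num.Theory.
Local Open Scope ring_scope.

(* Paper indices are 1-based: row/column k : 'I_n corresponds to paper index k+1. *)

(* E_{ij}: symmetric matrix with 1 in positions (i,j),(j,i) (1-based i j); E_i := E_{ii}. *)
Definition Emat (R : realFieldType) (n i j : nat) : 'M[R]_n :=
  \matrix_(k, l) ((((k.+1 == i) && (l.+1 == j)) || ((k.+1 == j) && (l.+1 == i)))%:R).

Definition frob (R : realFieldType) (n : nat) (S T : 'M[R]_n) : R := \tr (S *m T).

Definition psd (R : realFieldType) (n : nat) (A : 'M[R]_n) : Prop :=
  A^T = A /\ forall v : 'cV[R]_n, 0 <= (v^T *m A *m v) 0 0.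

Definition lowner (R : realFieldType) (n : nat) (A B : 'M[R]_n) : Prop := psd (B - A).

(* Constraint matrices A_i (1-based i = 1..n-1) of problem (P). *)
Definition Amat (R : realFieldType) (n i : nat) : 'M[R]_n :=
  if i == 1%N then Emat R n 1 1
  else if i == n.-1 then - Emat R n n.-1 n.-1 + Emat R n (n - 2) n
  else Emat R n i i + Emat R n i.-1 n.

Definition Bmat (R : realFieldType) (n : nat) : 'M[R]_n :=
  \matrix_(k, l) (((k == l) && (k.+1 < n)%N)%:R).

(* Objective vector c = e_{n-1}; variables x : 'I_(n-1) -> R, x i = paper x_{i+1}. *)
Definition cvec {R : realFieldType} {n : nat} (i : 'I_n.-1) : R := ((i.+1 == n.-1)%N)%:R.

Definition objP (R : realFieldType) (n : nat) (x : 'I_n.-1 -> R) : R :=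
  \sum_(i < n.-1) cvec i * x i.

Definition primal_feasible (R : realFieldType) (n : nat) (x : 'I_n.-1 -> R) : Prop :=
  lowner (\sum_(i < n.-1) x i *: Amat R n i.+1) (Bmat R n).

Definition dual_feasible (R : realFieldType) (n : nat) (Y : 'M[R]_n) : Prop :=
  (forall i : 'I_n.-1, frob (Amat R n i.+1) Y = cvec i) /\ psd Y.

From HB Require Import structures.
From mathcomp Require Import all_boot all_order all_algebra zify ring lra.
Import Order.TTheory GRing.Theory Num.Theory.
Set Implicit Arguments. Unset Strict Implicit.
Local Open Scope ring_scope.

(* Write n = m+3, so the matrices are indexed by 0..m+2 (paper
   indices 1..n) and the last index q = m+2 is the "0_1" corner of B.
   - Two facts about a PSD matrix Y: its diagonal is nonnegative, and a zero
     diagonal entry Y_aa forces the whole row and column a to vanish (test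
     the quadratic form on s e_a + e_b with s -> -oo).
   - Dual: the constraint A_1 . Y = 0 gives Y_11 = 0; inductively Y_kk = 0
     kills Y_{k,n}, so A_{k+1} . Y = 0 gives Y_{k+1,k+1} = 0.  At the end
     A_{n-1} . Y = -Y_{n-1,n-1} = 1, contradicting Y_{n-1,n-1} >= 0.
   - Primal: every A_i vanishes at (n,n) and only A_{n-1} meets (n,n-1), so
     the slack S = B - sum x_i A_i has S_nn = 0 and S_{n,n-1} = -x_{n-1};
     PSD-ness of S forces the objective x_{n-1} to be 0.  Since x = 0 is
     feasible (B is PSD), val(P) = 0. *)

Lemma quad_form_pair (R : realFieldType) n (Y : 'M[R]_n) a b (s : R) :
  let v := s *: delta_mx a (0 : 'I_1) + delta_mx b 0 in
  (v^T *m Y *m v) 0 0 = s ^+ 2 * Y a a + s * (Y a b + Y b a) + Y b b.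
Proof.
have entry c d : (delta_mx (0 : 'I_1) c *m Y *m delta_mx d (0 : 'I_1)) 0 0 = Y c d.
  by rewrite -rowE -colE !mxE.
have coord c d : \sum_j (delta_mx (0 : 'I_1) c *m Y) 0 j * delta_mx d (0 : 'I_1) j 0 = Y c d.
  by rewrite -[RHS]entry [RHS]mxE.
rewrite /= [(_ + _)^T]linearD /= [(_ *: _)^T]linearZ /= !trmx_delta.
rewrite !mulmxDl !mulmxDr -!scalemxAl -!scalemxAr !mxE !coord.
ring.
Qed.

Lemma psd_diag_ge0 (R : realFieldType) n (Y : 'M[R]_n) a : psd Y -> 0 <= Y a a.
Proof.
case=> _ Ypos; have := Ypos (0 *: delta_mx a 0 + delta_mx a 0).
by rewrite quad_form_pair expr2 !mul0r !add0r.
Qed.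

Lemma psd_diag0_row (R : realFieldType) n (Y : 'M[R]_n) a b :
  psd Y -> Y a a = 0 -> Y a b = 0.
Proof.
case=> Ysym Ypos Yaa.
have Yba : Y b a = Y a b by rewrite -{1}Ysym mxE.
apply/eqP/negPn/negP => Yab_neq0.
(* With s = -(|Y_bb| + 1) / (2 Y_ab) the quadratic form equals -1 + Y_bb - |Y_bb|. *)
have := Ypos ((- (`|Y b b| + 1) / (2 * Y a b)) *: delta_mx a 0 + delta_mx b 0).
rewrite quad_form_pair Yaa Yba mulr0 add0r.
have -> : (- (`|Y b b| + 1) / (2 * Y a b)) * (Y a b + Y a b) = - (`|Y b b| + 1).
  by field; rewrite Yab_neq0.
have := ler_norm (Y b b); lra.
Qed.

Lemma psd_diag0_col (R : realFieldType) n (Y : 'M[R]_n) a b :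
  psd Y -> Y a a = 0 -> Y b a = 0.
Proof.
move=> Ypsd Yaa; have := psd_diag0_row b Ypsd Yaa.
by case: Ypsd => Ysym _; rewrite -{1}Ysym mxE.
Qed.

Lemma frobD (R : realFieldType) n (A B Y : 'M[R]_n) :
  frob (A + B) Y = frob A Y + frob B Y.
Proof. by rewrite /frob mulmxDl mxtraceD. Qed.

Lemma frobN (R : realFieldType) n (A Y : 'M[R]_n) : frob (- A) Y = - frob A Y.
Proof. by rewrite /frob mulNmx linearN. Qed.

Lemma frob_delta (R : realFieldType) n (Y : 'M[R]_n) a b :
  frob (delta_mx a b) Y = Y b a.
Proof.
rewrite /frob /mxtrace (bigD1 a) //= big1 ?addr0.
  rewrite mxE (bigD1 b) //= big1 ?addr0; first by rewrite mxE !eqxx mul1r.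
  by move=> j hj; rewrite mxE eqxx (negbTE hj) mul0r.
by move=> i hi; rewrite mxE big1 // => j _; rewrite mxE (negbTE hi) mul0r.
Qed.

Lemma Emat_delta (R : realFieldType) n a b : (a <= n)%N -> (b <= n)%N ->
  Emat R n.+1 a.+1 b.+1 = if a == b then delta_mx (inord a) (inord a)
     else delta_mx (inord a) (inord b) + delta_mx (inord b) (inord a).
Proof.
move=> ha hb; apply/matrixP => k l.
have inordE (i : 'I_n.+1) c : (c <= n)%N -> (i == inord c) = (i == c :> nat).
  by move=> hc; rewrite -val_eqE /= inordK.
case: eqP => [<-|hab]; rewrite !mxE !inordE // !eqSS; first by rewrite orbb.
case: (k == a :> nat) / eqP; case: (l == b :> nat) / eqP;
  case: (k == b :> nat) / eqP; case: (l == a :> nat) / eqP => //=;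
  rewrite ?addr0 ?add0r //; lia.
Qed.

Lemma frob_Emat (R : realFieldType) n (Y : 'M[R]_n.+1) a b :
  (a <= n)%N -> (b <= n)%N ->
  frob (Emat R n.+1 a.+1 b.+1) Y = if a == b then Y (inord a) (inord a)
     else Y (inord a) (inord b) + Y (inord b) (inord a).
Proof.
move=> ha hb; rewrite Emat_delta //; case: eqP => [->|_].
  by rewrite frob_delta.
by rewrite frobD !frob_delta addrC.
Qed.

Lemma frob_Amat_first (R : realFieldType) m (Y : 'M[R]_m.+3) :
  frob (Amat R m.+3 1) Y = Y (inord 0) (inord 0).
Proof. by rewrite /Amat /= frob_Emat. Qed.

Lemma frob_Amat_mid (R : realFieldType) m (Y : 'M[R]_m.+3) k : (k < m)%N ->
  frob (Amat R m.+3 k.+2) Y = Y (inord k.+1) (inord k.+1)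
    + (Y (inord k) (inord m.+2) + Y (inord m.+2) (inord k)).
Proof.
move=> hk; rewrite /Amat /=.
have -> : (k.+2 == m.+2) = false by lia.
rewrite frobD !frob_Emat ?eqxx; try lia.
by have -> : (k == m.+2) = false by lia.
Qed.

Lemma frob_Amat_last (R : realFieldType) m (Y : 'M[R]_m.+3) :
  frob (Amat R m.+3 m.+2) Y = - Y (inord m.+1) (inord m.+1)
    + (Y (inord m) (inord m.+2) + Y (inord m.+2) (inord m)).
Proof.
rewrite /Amat /= eqxx !subSS subn0 frobD frobN !frob_Emat ?eqxx; try lia.
by have -> : (m == m.+2) = false by lia.
Qed.

Lemma dual_diag_vanish (R : realFieldType) m (Y : 'M[R]_m.+3) :
  dual_feasible Y -> forall k, (k <= m)%N -> Y (inord k) (inord k) = 0.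
Proof.
case=> constr Ypsd; elim=> [_|k IH hk].
  by have := constr (inord 0); rewrite /cvec inordK // frob_Amat_first.
have Ykk := IH (ltnW hk).
have := constr (inord k.+1); rewrite /cvec inordK; last by lia.
rewrite frob_Amat_mid // (psd_diag0_row _ Ypsd Ykk) (psd_diag0_col _ Ypsd Ykk).
by rewrite !addr0; have -> : (k.+2 == m.+2) = false by lia.
Qed.

(* Hence the last constraint reads -Y_{n-1,n-1} = 1: the dual is infeasible. *)
Lemma dual_infeasible (R : realFieldType) m :
  ~ (exists Y : 'M[R]_m.+3, dual_feasible Y).
Proof.
move=> [Y Yfeas]; have Ymm := dual_diag_vanish Yfeas (leqnn m).
case: Yfeas => constr Ypsd.
have := constr (inord m.+1); rewrite /cvec inordK; last by lia.
rewrite frob_Amat_last (psd_diag0_row _ Ypsd Ymm) (psd_diag0_col _ Ypsd Ymm) /= eqxx.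
have := psd_diag_ge0 (inord m.+1) Ypsd; rewrite addr0 /=; lra.
Qed.

(* Decide the nat-valued boolean coefficients of a matrix entry by arithmetic. *)
Ltac decide_bool_coefs := repeat match goal with |- context [nat_of_bool ?b] =>
  match b with true => fail 1 | false => fail 1 | _ =>
   first [ rewrite (_ : b = false); last by lia
         | rewrite (_ : b = true); last by lia ] end end.

Lemma Amat_corner (R : realFieldType) m i : (1 <= i <= m.+2)%N ->
  Amat R m.+3 i ord_max ord_max = 0.
Proof.
move=> hi; rewrite /Amat; case: ifP => h1; [|case: ifP => h2];
  rewrite !mxE /=; decide_bool_coefs; by rewrite /= ?oppr0 ?addr0.
Qed.

Lemma Amat_last_row (R : realFieldType) m i : (1 <= i <= m.+2)%N ->
  Amat R m.+3 i ord_max (inord m) = (i == m.+2)%:R.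
Proof.
move=> hi; have hm : (m < m.+3)%N by lia.
rewrite /Amat; case: ifP => h1; [|case: ifP => h2];
  rewrite !mxE /= ?(inordK hm); decide_bool_coefs; by rewrite /= ?oppr0 ?addr0 ?add0r.
Qed.

Definition slack (R : realFieldType) m (x : 'I_m.+3.-1 -> R) : 'M[R]_m.+3 :=
  Bmat R m.+3 - \sum_(i < m.+3.-1) x i *: Amat R m.+3 i.+1.

Lemma slack_corner (R : realFieldType) m (x : 'I_m.+3.-1 -> R) :
  slack x ord_max ord_max = 0.
Proof.
rewrite !mxE summxE big1 ?subr0; first by rewrite eqxx ltnn.
by move=> i _; rewrite mxE Amat_corner ?mulr0 //; have := ltn_ord i; lia.
Qed.

Lemma slack_last_row (R : realFieldType) m (x : 'I_m.+3.-1 -> R) :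
  slack x ord_max (inord m) = - objP x.
Proof.
rewrite !mxE summxE.
have -> : (ord_max == inord m :> 'I_m.+3) = false by rewrite -val_eqE /= inordK; lia.
rewrite /= sub0r /objP; congr (- _); apply: eq_bigr => i _.
by rewrite mxE Amat_last_row ?(mulrC (x i)) //; have := ltn_ord i; lia.
Qed.

Lemma primal_objective0 (R : realFieldType) m (x : 'I_m.+3.-1 -> R) :
  primal_feasible x -> objP x = 0.
Proof.
move=> Sx; apply: oppr_inj; rewrite oppr0 -slack_last_row.
exact: psd_diag0_row Sx (slack_corner x).
Qed.

Lemma Bmat_psd (R : realFieldType) n : psd (Bmat R n).
Proof.
split.
  by apply/matrixP => i j; rewrite !mxE eq_sym; case: eqP => [->|].
move=> v; rewrite !mxE; apply: sumr_ge0 => j _.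
rewrite !mxE (bigD1 j) //= big1 ?addr0.
  rewrite !mxE eqxx /=; case: (j.+1 < n)%N; rewrite /= ?mulr1 ?mulr0 ?mul0r //.
  by rewrite -expr2 sqr_ge0.
by move=> k hk; rewrite !mxE (negbTE hk) /= mulr0.
Qed.

Lemma primal_zero_feasible (R : realFieldType) n :
  primal_feasible (fun _ : 'I_n.-1 => 0 : R).
Proof.
rewrite /primal_feasible /lowner big1 ?subr0; first exact: Bmat_psd.
by move=> i _; rewrite scale0r.
Qed.

Theorem mainTheorem7 (R : realFieldType) (n : nat) (hn : (3 <= n)%N) :
  (forall x : 'I_n.-1 -> R, primal_feasible x -> objP x <= 0) /\
  (forall u : R, (forall x : 'I_n.-1 -> R, primal_feasible x -> objP x <= u) -> 0 <= u) /\
  ~ (exists Y : 'M[R]_n, dual_feasible Y).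
Proof.
have [m ->] : exists m, n = m.+3 by exists (n - 3)%N; lia.
split; [|split]; last exact: dual_infeasible.
- by move=> x /primal_objective0 ->.
- move=> u ub; have := ub _ (primal_zero_feasible R m.+3).
  by rewrite (primal_objective0 (primal_zero_feasible R m.+3)).
Qed.
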